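(* A graph $G$ admits a proper straight-line drawing with spanning ratio equal to $1$ if and only if $G$ is a point visibility graph.
   Context: A drawing of a graph maps each vertex to a distinct point of the plane and each edge to a Jordan arc between its end-vertices; it is straight-line if every edge is drawn as the straight-line segment between its end-vertices. A straight-line drawing is proper if no two vertices coincide and no edge contains a vertex other than its end-vertices. In a straight-line drawing $\Gamma$, the length of a path is the sum of the Euclidean lengths of its edges, $\pi_\Gamma(u,v)$ is the minimum length of a path between $u$ and $v$, and $\|uv\|_\Gamma$ is the Euclidean distance between $u$ and $v$. The spanning ratio of $\Gamma$ is $\max_{u\neq v}\pi_\Gamma(u,v)/\|uv\|_\Gamma$. A graph $G$ is a point visibility graph if there is a finite point set $P\subset\mathbb R^2$ such that $G$ has one vertex per point of $P$ and two vertices are adjacent if and only if the open straight-line segment between the corresponding points contains no point of $P$. *)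

From HB Require Import structures.
From mathcomp Require Import all_boot all_order all_algebra.
From mathcomp Require Import classical_sets boolp reals constructive_ereal ereal.
Set Implicit Arguments. Unset Strict Implicit. Unset Printing Implicit Defensive.
Import Order.TTheory GRing.Theory Num.Theory.
Local Open Scope ring_scope.
Local Open Scope classical_set_scope.

Section Defs.
Variable R : realType.

Definition pt2 := (R * R)%type.

Definition edist (p q : pt2) : R :=
  Num.sqrt ((p.1 - q.1) ^+ 2 + (p.2 - q.2) ^+ 2).

Definition on_open_seg (p q r : pt2) : Prop :=
  exists t : R, 0 < t < 1 /\ r.1 = p.1 + t * (q.1 - p.1)
                          /\ r.2 = p.2 + t * (q.2 - p.2).

Variables (T : finType) (e : rel T).

(* A straight-line drawing of the graph (T, e) is determined by the position
   of its vertices; each edge uv is drawn as the segment pos u -- pos v. *)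
Definition proper_drawing (pos : T -> pt2) : Prop :=
  injective pos /\
  (forall u v w, e u v -> w != u -> w != v -> ~ on_open_seg (pos u) (pos v) (pos w)).

Fixpoint walk_length (pos : T -> pt2) (x : T) (s : seq T) : R :=
  match s with
  | [::] => 0
  | y :: s' => edist (pos x) (pos y) + walk_length pos y s'
  end.

(* s is (the tail of) a path from u to v in (T, e): consecutive vertices
   adjacent, no repeated vertex *)
Definition is_path_from_to (u v : T) (s : seq T) : bool :=
  [&& path e u s, last u s == v & uniq (u :: s)].

(* pi_Gamma(u,v): minimum length of a path from u to v (+oo if none) *)
Definition pi_dist (pos : T -> pt2) (u v : T) : \bar R :=
  ereal_inf [set (walk_length pos u s)%:E | s in [set s | is_path_from_to u v s]].

(* spanning ratio: max over u <> v of pi(u,v) / ||uv||.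
   Convention: a graph with fewer than two vertices has spanning ratio 1. *)
Definition spanning_ratio (pos : T -> pt2) : \bar R :=
  if (#|T| <= 1)%N then 1%E
  else ereal_sup [set (pi_dist pos uv.1 uv.2 * ((edist (pos uv.1) (pos uv.2))^-1)%:E)%E
                 | uv in [set uv : T * T | uv.1 != uv.2]].

(* (T, e) is (isomorphic to) the visibility graph of a finite pt2 set P:
   P = image of the injective map pos, and u v adjacent iff the open segment
   between pos u and pos v contains no pt2 of P. *)
Definition is_point_visibility_graph : Prop :=
  exists pos : T -> pt2, injective pos /\
    forall u v, e u v <-> (u != v /\ forall w, ~ on_open_seg (pos u) (pos v) (pos w)).

End Defs.

(* A drawing with spanning ratio 1 realises each distance |uv| by a path.
   If u, v are non-adjacent and no vertex lies strictly between them, every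
   path from u leaves through a neighbour w off the segment uv, so by the
   strict triangle inequality it overshoots |uv| by at least
   |uw| + |wv| - |uv| > 0; as there are finitely many neighbours, the
   infimum pi(u,v) exceeds |uv|, contradicting ratio 1.  Conversely, in a
   visibility drawing the vertices on the segment uv, in order, form a path
   of length exactly |uv|: split the segment at an interior vertex and
   induct on the number of vertices inside. *)

From HB Require Import structures.
From mathcomp Require Import all_boot all_order all_algebra.
From mathcomp Require Import classical_sets boolp reals constructive_ereal ereal.
From mathcomp Require Import ring lra.
Set Implicit Arguments. Unset Strict Implicit. Unset Printing Implicit Defensive.
Import Order.TTheory GRing.Theory Num.Theory.
Local Open Scope ring_scope.

Section EuclideanPlane.
Variable R : realType.
Implicit Types (p q r : pt2 R) (s t : R).

Lemma edist_ge0 p q : 0 <= edist p q.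
Proof. exact: sqrtr_ge0. Qed.

Lemma sqr_edist p q : edist p q ^+ 2 = (p.1 - q.1) ^+ 2 + (p.2 - q.2) ^+ 2.
Proof. by rewrite sqr_sqrtr // addr_ge0 ?sqr_ge0. Qed.

Lemma edistxx p : edist p p = 0.
Proof. by rewrite /edist !subrr expr0n /= addr0 sqrtr0. Qed.

Lemma edist_gt0 p q : p != q -> 0 < edist p q.
Proof.
case: p q => [p1 p2] [q1 q2] neq; rewrite sqrtr_gt0 /= lt_def addr_ge0 ?sqr_ge0 // andbT.
rewrite paddr_eq0 ?sqr_ge0 // !sqrf_eq0 !subr_eq0.
by apply: contra neq => /andP[/eqP -> /eqP ->].
Qed.

Lemma dot_le_edist p q r :
  (p.1 - q.1) * (q.1 - r.1) + (p.2 - q.2) * (q.2 - r.2) <= edist p q * edist q r.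
Proof.
rewrite -sqrtrM ?addr_ge0 ?sqr_ge0 //.
apply: le_trans (ler_norm _) _; rewrite -sqrtr_sqr ler_sqrt ?mulr_ge0 ?addr_ge0 ?sqr_ge0 //.
move: (p.1 - q.1) (p.2 - q.2) (q.1 - r.1) (q.2 - r.2) => a1 a2 b1 b2.
have := sqr_ge0 (a1 * b2 - a2 * b1); nra.
Qed.

Lemma sqr_edist_split p q r : edist p r ^+ 2 = edist p q ^+ 2 + edist q r ^+ 2 +
  2 * ((p.1 - q.1) * (q.1 - r.1) + (p.2 - q.2) * (q.2 - r.2)).
Proof. by rewrite !sqr_edist; ring. Qed.

Lemma edist_triangle p q r : edist p r <= edist p q + edist q r.
Proof.
rewrite -(ler_pXn2r (n := 2)) // ?nnegrE ?addr_ge0 ?edist_ge0 //.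
rewrite (sqr_edist_split p q r); have := dot_le_edist p q r; nra.
Qed.

Definition lerp p q t : pt2 R := (p.1 + t * (q.1 - p.1), p.2 + t * (q.2 - p.2)).

Lemma on_open_segP p q r : on_open_seg p q r <-> exists2 t, 0 < t < 1 & r = lerp p q t.
Proof.
case: r => r1 r2; split=> [[t [t01 [/= -> ->]]] | [t t01 [-> ->]]]; by exists t.
Qed.

Lemma lerp0 p q : lerp p q 0 = p.
Proof. by rewrite /lerp !mul0r !addr0; case: p. Qed.

Lemma lerp1 p q : lerp p q 1 = q.
Proof. by rewrite /lerp !mul1r !subrKC; case: q. Qed.

Lemma lerp_inj p q : p != q -> injective (lerp p q).
Proof.
case: p q => [p1 p2] [q1 q2] neq s t [e1 e2]; apply/eqP; apply: contraNT neq => nst.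
have coord_eq (a b : R) : a + s * (b - a) = a + t * (b - a) -> a == b.
  move/addrI/eqP; rewrite -subr_eq0 -mulrBl mulf_eq0 subr_eq0 (negbTE nst) /=.
  by rewrite subr_eq0 eq_sym.
by rewrite xpair_eqE !coord_eq.
Qed.

Lemma lerp_lerp_l p q s t : lerp p (lerp p q t) s = lerp p q (s * t).
Proof. by rewrite /lerp /=; congr pair; ring. Qed.

Lemma lerp_lerp_r p q s t : lerp (lerp p q t) q s = lerp p q (t + s * (1 - t)).
Proof. by rewrite /lerp /=; congr pair; ring. Qed.

Lemma edist_lerp_l p q t : 0 <= t -> edist p (lerp p q t) = t * edist p q.
Proof.
move=> t0; rewrite {1}/edist.
have -> : (p.1 - (lerp p q t).1) ^+ 2 + (p.2 - (lerp p q t).2) ^+ 2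
    = t ^+ 2 * ((p.1 - q.1) ^+ 2 + (p.2 - q.2) ^+ 2) by rewrite /=; ring.
by rewrite sqrtrM ?sqr_ge0 // sqrtr_sqr ger0_norm.
Qed.

Lemma edist_lerp_r p q t : t <= 1 -> edist (lerp p q t) q = (1 - t) * edist p q.
Proof.
move=> t1; rewrite {1}/edist.
have -> : ((lerp p q t).1 - q.1) ^+ 2 + ((lerp p q t).2 - q.2) ^+ 2
    = (1 - t) ^+ 2 * ((p.1 - q.1) ^+ 2 + (p.2 - q.2) ^+ 2) by rewrite /=; ring.
by rewrite sqrtrM ?sqr_ge0 // sqrtr_sqr ger0_norm ?subr_ge0.
Qed.

Lemma on_open_seg_neq p q r : p != q -> on_open_seg p q r -> r != p /\ r != q.
Proof.
move=> neq /on_open_segP[t /andP[t0 t1] ->].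
split; [rewrite -{2}(lerp0 p q) | rewrite -{2}(lerp1 p q)].
  by rewrite (inj_eq (lerp_inj neq)) gt_eqF.
by rewrite (inj_eq (lerp_inj neq)) lt_eqF.
Qed.

Lemma edist_triangle_tight_aligned p q r : edist p q + edist q r <= edist p r ->
  edist q r * (p.1 - q.1) = edist p q * (q.1 - r.1) /\
  edist q r * (p.2 - q.2) = edist p q * (q.2 - r.2).
Proof.
move=> tight; have a0 := edist_ge0 p q; have b0 := edist_ge0 q r.
have sq_tight : (edist p q + edist q r) ^+ 2 <= edist p r ^+ 2.
  by rewrite ler_pXn2r ?nnegrE ?addr_ge0 ?edist_ge0.
move: sq_tight; rewrite (sqr_edist_split p q r).
have := sqr_edist p q; have := sqr_edist q r.
case: p q r {tight} a0 b0 => [p1 p2] [q1 q2] [r1 r2] /=.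
move: (edist _ _) (edist _ _) => b a b0 a0 hb ha tight.
set dot := (p1 - q1) * (q1 - r1) + (p2 - q2) * (q2 - r2) in tight.
have dot_ge : 0 <= a * b * (dot - a * b) by rewrite mulr_ge0 ?mulr_ge0 // subr_ge0; nra.
have : (b * (p1 - q1) - a * (q1 - r1)) ^+ 2 + (b * (p2 - q2) - a * (q2 - r2)) ^+ 2 <= 0.
  have -> : (b * (p1 - q1) - a * (q1 - r1)) ^+ 2 + (b * (p2 - q2) - a * (q2 - r2)) ^+ 2
    = b ^+ 2 * ((p1 - q1) ^+ 2 + (p2 - q2) ^+ 2) + a ^+ 2 * ((q1 - r1) ^+ 2 + (q2 - r2) ^+ 2)
      - 2 * a * b * dot by rewrite /dot; ring.
  by rewrite -ha -hb; nra.
rewrite le_eqVlt ltNge addr_ge0 ?sqr_ge0 // orbF paddr_eq0 ?sqr_ge0 //.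
by rewrite !sqrf_eq0 !subr_eq0 => /andP[/eqP -> /eqP ->].
Qed.

Lemma edist_triangle_tight p q r : q != p -> q != r ->
  edist p q + edist q r <= edist p r -> on_open_seg p r q.
Proof.
move=> nqp nqr /edist_triangle_tight_aligned aligned; apply/on_open_segP.
have a0 : 0 < edist p q by rewrite edist_gt0 // eq_sym.
have b0 : 0 < edist q r by rewrite edist_gt0.
move: (edist p q) (edist q r) a0 b0 aligned => a b a0 b0 [e1 e2].
have ab0 : a + b != 0 by rewrite gt_eqF ?addr_gt0.
exists (a / (a + b)).
  by rewrite divr_gt0 ?addr_gt0 //= ltr_pdivrMr ?addr_gt0 // mul1r ltrDl.
have coord (x y z : R) : b * (x - y) = a * (y - z) -> y = x + a / (a + b) * (z - x).
  move=> exyz; apply/eqP; rewrite -subr_eq0.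
  have -> : y - (x + a / (a + b) * (z - x)) = (a * (y - z) - b * (x - y)) / (a + b).
    by field.
  by rewrite exyz subrr mul0r.
by case: q e1 e2 {nqp nqr} => q1 q2 /= /coord -> /coord ->.
Qed.

End EuclideanPlane.

Lemma finite_pos_lower_bound (R : realDomainType) (T : finType) (P : pred T) (g : T -> R) :
  (forall x, P x -> 0 < g x) -> exists2 delta, 0 < delta & forall x, P x -> delta <= g x.
Proof.
move=> g_gt0; exists (\big[Order.min/1]_(x | P x) g x).
  by apply: (big_ind (fun y => 0 < y)) => // y z y0 z0; rewrite lt_min y0.
by move=> x Px; rewrite (bigD1 x) //= ge_min lexx.
Qed.

Section Drawings.
Variables (R : realType) (T : finType) (e : rel T) (pos : T -> pt2 R).

Lemma walk_length_cat x s1 s2 :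
  walk_length pos x (s1 ++ s2) = walk_length pos x s1 + walk_length pos (last x s1) s2.
Proof. by elim: s1 x => [|y s IH] x /=; rewrite ?add0r // IH addrA. Qed.

Lemma edist_le_walk_length x s : edist (pos x) (pos (last x s)) <= walk_length pos x s.
Proof.
elim: s x => [|y s IH] x /=; first by rewrite edistxx.
exact: le_trans (edist_triangle _ (pos y) _) (lerD _ (IH y)).
Qed.

Lemma edist_le_pi_dist u v : ((edist (pos u) (pos v))%:E <= pi_dist e pos u v)%E.
Proof.
apply/ereal_infP => _ [s /and3P[_ /eqP <- _] <-].
by rewrite lee_fin edist_le_walk_length.
Qed.

Lemma pi_dist_le_walk_length u v s :
  is_path_from_to e u v s -> (pi_dist e pos u v <= (walk_length pos u s)%:E)%E.
Proof. by move=> uvs; apply: ereal_inf_lbound; exists s. Qed.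

Lemma pi_dist_le_spanning_ratio u v : u != v ->
  (pi_dist e pos u v * ((edist (pos u) (pos v))^-1)%:E <= spanning_ratio e pos)%E.
Proof.
move=> nuv; have T_gt1 : (1 < #|T|)%N by apply/card_gt1P; exists u, v.
by rewrite /spanning_ratio leqNgt T_gt1 /=; apply: ereal_sup_ubound; exists (u, v).
Qed.

Lemma spanning_ratio1_pi_dist_le u v : injective pos -> spanning_ratio e pos = 1%E ->
  u != v -> (pi_dist e pos u v <= (edist (pos u) (pos v))%:E)%E.
Proof.
move=> pinj sr1 nuv; have d0 : 0 < edist (pos u) (pos v) by rewrite edist_gt0 ?(inj_eq pinj).
have := pi_dist_le_spanning_ratio nuv; have := edist_le_pi_dist u v; rewrite sr1.
case: (pi_dist e pos u v) => [r | |] //= _.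
  by rewrite -EFinM !lee_fin ler_pdivrMr // mul1r.
by rewrite gt0_mulye // lte_fin invr_gt0.
Qed.

Lemma spanning_ratio_eq1 : injective pos ->
  (forall u v, u != v -> pi_dist e pos u v = (edist (pos u) (pos v))%:E) ->
  spanning_ratio e pos = 1%E.
Proof.
move=> pinj pi_edist; rewrite /spanning_ratio; case: leqP => // /card_gt1P[u [v [_ _ nuv]]].
have ratio1 x y : x != y ->
    (pi_dist e pos x y * ((edist (pos x) (pos y))^-1)%:E)%E = 1%E.
  by move=> nxy; rewrite pi_edist // -EFinM divff // gt_eqF // edist_gt0 ?(inj_eq pinj).
rewrite -[RHS]ereal_sup1; congr ereal_sup; apply/seteqP; split => z.
  by move=> [[x y] /= nxy <-]; rewrite ratio1.
by move=> ->; exists (u, v); rewrite //= ratio1.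
Qed.

Lemma proper_drawing_edge_clear u v w : irreflexive e -> proper_drawing e pos ->
  e u v -> ~ on_open_seg (pos u) (pos v) (pos w).
Proof.
move=> e_irr [pinj clear] euv w_in.
have puv : pos u != pos v by rewrite (inj_eq pinj); apply: contraTneq euv => ->; rewrite e_irr.
have [wu wv] := on_open_seg_neq puv w_in.
by apply: (clear u v w euv) w_in; [apply: contraNneq wu => -> | apply: contraNneq wv => ->].
Qed.

Lemma pi_dist_gt_edist u v : irreflexive e -> injective pos -> u != v -> ~~ e u v ->
  (forall w, ~ on_open_seg (pos u) (pos v) (pos w)) ->
  ((edist (pos u) (pos v))%:E < pi_dist e pos u v)%E.
Proof.
move=> e_irr pinj nuv neuv clear; set d := edist (pos u) (pos v).
have [delta delta0 le_delta] : exists2 delta, 0 < delta & forall w, e u w ->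
    delta <= edist (pos u) (pos w) + edist (pos w) (pos v) - d.
  apply: finite_pos_lower_bound => w euw; rewrite subr_gt0 lt_neqAle edist_triangle andbT.
  apply/negP => /eqP tight; apply: (clear w); apply: edist_triangle_tight; last by rewrite -tight.
    by rewrite (inj_eq pinj); apply: contraTneq euw => ->; rewrite e_irr.
  by rewrite (inj_eq pinj); apply: contraNneq neuv => <-.
apply: (@lt_le_trans _ _ (d + delta)%:E); first by rewrite lte_fin ltrDl.
apply/ereal_infP => _ [[|x s] /and3P[/= uxs /eqP end_s _] <-].
  by move: nuv; rewrite end_s eqxx.
move: uxs => /andP[eux _]; rewrite lee_fin /=.
have := le_delta x eux; have := edist_le_walk_length x s; rewrite end_s; lra.
Qed.

Definition seg_vertices u v : {set T} :=
  [set x | `[< on_open_seg (pos u) (pos v) (pos x) >]].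

Lemma seg_verticesP u v x :
  reflect (on_open_seg (pos u) (pos v) (pos x)) (x \in seg_vertices u v).
Proof. by rewrite inE; apply: asboolP. Qed.

Lemma seg_vertices_proper_l u v w : pos u != pos v ->
  on_open_seg (pos u) (pos v) (pos w) -> seg_vertices u w \proper seg_vertices u v.
Proof.
move=> puv w_in; have [wu _] := on_open_seg_neq puv w_in.
have /on_open_segP[t /andP[t0 t1] posw] := w_in.
apply/properP; split; last first.
  exists w; first exact/seg_verticesP.
  by apply/seg_verticesP => /(on_open_seg_neq _)[]; rewrite 1?eq_sym ?eqxx.
apply/fintype.subsetP => x /seg_verticesP/on_open_segP[r /andP[r0 r1] posx].
apply/seg_verticesP/on_open_segP; rewrite posx posw lerp_lerp_l.
by exists (r * t); rewrite // mulr_gt0 //= mulr_ilt1 ?ltW.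
Qed.

Lemma seg_vertices_proper_r u v w : pos u != pos v ->
  on_open_seg (pos u) (pos v) (pos w) -> seg_vertices w v \proper seg_vertices u v.
Proof.
move=> puv w_in; have [_ wv] := on_open_seg_neq puv w_in.
have /on_open_segP[t /andP[t0 t1] posw] := w_in.
apply/properP; split; last first.
  exists w; first exact/seg_verticesP.
  by apply/seg_verticesP => /(on_open_seg_neq _)[]; rewrite ?eqxx.
apply/fintype.subsetP => x /seg_verticesP/on_open_segP[r /andP[r0 r1] posx].
apply/seg_verticesP/on_open_segP; rewrite posx posw lerp_lerp_r.
by exists (t + r * (1 - t)) => //; apply/andP; split; nra.
Qed.

(* The parameters [t] order the vertices along the segment; this is what
   keeps the concatenation in [straight_path_cat] duplicate-free. *)
Definition straight_path u v s := [/\ is_path_from_to e u v s,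
  walk_length pos u s = edist (pos u) (pos v) &
  {in s, forall x, exists2 t, 0 < t <= 1 & pos x = lerp (pos u) (pos v) t}].

Lemma straight_path_edge u v : e u v -> u != v -> straight_path u v [:: v].
Proof.
move=> euv nuv; split; first by rewrite /is_path_from_to /= euv eqxx mem_seq1 nuv.
  by rewrite /= addr0.
by move=> x; rewrite inE => /eqP ->; exists 1; rewrite ?lerp1 // ltr01 lexx.
Qed.

Lemma straight_path_cat u w v t s1 s2 : pos u != pos v -> 0 < t < 1 ->
  pos w = lerp (pos u) (pos v) t -> straight_path u w s1 -> straight_path w v s2 ->
  straight_path u v (s1 ++ s2).
Proof.
move=> nuv /andP[t0 t1] posw [/and3P[path1 /eqP end1 uniq1] len1 in1]
  [/and3P[path2 /eqP end2 uniq2] len2 in2].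
have {in1} in1 x : x \in s1 -> exists2 t', 0 < t' <= t & pos x = lerp (pos u) (pos v) t'.
  move=> /in1[r /andP[r0 r1] ->]; exists (r * t); last by rewrite posw lerp_lerp_l.
  by rewrite mulr_gt0 //= ler_piMl // ltW.
have {in2} in2 x : x \in s2 -> exists2 t', t < t' <= 1 & pos x = lerp (pos u) (pos v) t'.
  move=> /in2[r /andP[r0 r1] ->]; exists (t + r * (1 - t)); last by rewrite posw lerp_lerp_r.
  by apply/andP; split; nra.
have param_inj := inj_eq (lerp_inj nuv).
move: uniq1 uniq2 => /= /andP[u_notin1 uniq1] /andP[_ uniq2].
split.
- rewrite /is_path_from_to cat_path path1 end1 path2 last_cat end1 end2 eqxx /=.
  rewrite mem_cat cat_uniq negb_or u_notin1 uniq1 uniq2 /= andbT; apply/andP; split.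
    apply/negP => /in2[r /andP[tr _]] /eqP.
    by rewrite -{1}(lerp0 (pos u) (pos v)) param_inj => /eqP r0; move: tr; rewrite -r0 ltNge ltW.
  apply/hasPn => x /in2[r2 /andP[tr2 _] posx2]; apply/negP => /in1[r1 /andP[_ r1t]] /eqP.
  by rewrite posx2 param_inj => /eqP r21; move: tr2; rewrite r21 ltNge r1t.
- by rewrite walk_length_cat end1 len1 len2 posw edist_lerp_l ?edist_lerp_r ?ltW //; ring.
move=> x; rewrite mem_cat => /orP[/in1 | /in2] [r /andP[r0 r1] ->]; exists r => //.
  by rewrite r0 (le_trans r1) ?ltW.
by rewrite r1 (lt_trans t0).
Qed.

Section Visibility.
Hypothesis pinj : injective pos.
Hypothesis sees : forall u v, u != v ->
  (forall w, ~ on_open_seg (pos u) (pos v) (pos w)) -> e u v.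

Lemma exists_straight_path u v : u != v -> exists s, straight_path u v s.
Proof.
have [n] := ubnP #|seg_vertices u v|; elim: n u v => // n IH u v lt_n nuv.
have puv : pos u != pos v by rewrite (inj_eq pinj).
have [[w w_in] | clear] := pselect (exists w, on_open_seg (pos u) (pos v) (pos w)).
  have [wu wv] := on_open_seg_neq puv w_in.
  have /on_open_segP[t t01 posw] := w_in.
  have [s1 path1] : exists s, straight_path u w s.
    apply: IH; last by apply: contraNneq wu => ->.
    by apply: leq_trans (proper_card (seg_vertices_proper_l puv w_in)) _; rewrite -ltnS.
  have [s2 path2] : exists s, straight_path w v s.
    apply: IH; last by apply: contraNneq wv => ->.
    by apply: leq_trans (proper_card (seg_vertices_proper_r puv w_in)) _; rewrite -ltnS.
  by exists (s1 ++ s2); apply: straight_path_cat puv t01 posw path1 path2.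
have euv : e u v by apply: sees nuv _ => w w_in; apply: clear; exists w.
by exists [:: v]; apply: straight_path_edge.
Qed.

Lemma pi_dist_eq_edist u v : u != v -> pi_dist e pos u v = (edist (pos u) (pos v))%:E.
Proof.
move=> /exists_straight_path[s [uvs len _]].
by apply/le_anti; rewrite edist_le_pi_dist andbT -len pi_dist_le_walk_length.
Qed.

End Visibility.

End Drawings.

Theorem lemma2 (R : realType) (T : finType) (e : rel T)
    (e_sym : symmetric e) (e_irr : irreflexive e) :
  (exists pos : T -> pt2 R, proper_drawing e pos /\ spanning_ratio e pos = 1%E)
  <-> is_point_visibility_graph R e.
Proof.
split=> [[pos [proper sr1]] | [pos [pinj vis]]].
- have pinj := proper.1; exists pos; split=> // u v; split=> [euv | [nuv clear]].
    split; first by apply: contraTneq euv => ->; rewrite e_irr.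
    by move=> w; apply: proper_drawing_edge_clear.
  apply/negPn/negP => neuv.
  have := spanning_ratio1_pi_dist_le pinj sr1 nuv.
  by rewrite leNgt pi_dist_gt_edist.
- exists pos; split; first by split=> // u v w /vis[_ clear].
  apply: (spanning_ratio_eq1 pinj) => u v; apply: (pi_dist_eq_edist pinj).
  by move=> x y nxy clear; apply/vis.
Qed.
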